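(* There exists a system of $78$ distinct lines through the origin in $\mathbb{R}^{11}$ whose angle set is $\{\tfrac13,\tfrac{1}{\sqrt{11}},\tfrac{1}{11},0\}$; in particular its coherence is $\tfrac13$.
   Context: For a line system $(l_j)_{j\in S}$ with unit vectors $\phi_j$ spanning $l_j$, the angle set is $\{|\langle\phi_i,\phi_j\rangle| : i\neq j\}$ and the coherence is the maximum of the angle set. *)

From HB Require Import structures.
From mathcomp Require Import all_boot all_order all_algebra.
From mathcomp Require Import reals.
Set Implicit Arguments. Unset Strict Implicit. Unset Printing Implicit Defensive.
Import Order.TTheory GRing.Theory Num.Theory.
Local Open Scope ring_scope.

Definition dotp (R : realType) (d : nat) (u v : 'rV[R]_d) : R :=
  \sum_(k < d) u 0 k * v 0 k.

Definition unit_spanning_distinct_lines (R : realType) (n d : nat)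
    (phi : 'I_n -> 'rV[R]_d) : Prop :=
  (forall j, dotp (phi j) (phi j) = 1) /\
  (forall i j, (phi i == phi j)%MS -> i = j).

Definition angle_set (R : realType) (n d : nat) (phi : 'I_n -> 'rV[R]_d)
  : R -> Prop :=
  fun x => exists i j : 'I_n, i != j /\ x = `|dotp (phi i) (phi j)|.

(* Coherence: the maximum of the angle set (all entries are >= 0, so 0 is a
   harmless default for the iterated max). *)
Definition coherence (R : realType) (n d : nat) (phi : 'I_n -> 'rV[R]_d) : R :=
  \big[Num.max/0]_(ij : 'I_n * 'I_n | ij.1 != ij.2)
     `|dotp (phi ij.1) (phi ij.2)|.

(** The lines are spanned by 78 integer vectors of three kinds: twelve +-1
    vectors with pairwise inner products +-1 (squared norm 11), the eleven
    standard basis vectors, and 55 vectors with nine entries +-1 and two zeros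
    (squared norm 9).  For the integer Gram matrix g, the angle between the
    normalised vectors i and j is |g_ij| / sqrt (g_ii g_jj); a computation over
    Z shows that each off-diagonal g_ij is 0 or satisfies c g_ij^2 = g_ii g_jj
    with c in {9, 11, 121}, i.e. the angle is 0, 1/3, 1/sqrt 11 or 1/11.  All
    angles being below 1 also makes the lines pairwise distinct. *)
From HB Require Import structures.
From mathcomp Require Import all_boot all_order all_algebra.
From mathcomp Require Import reals.
Set Implicit Arguments. Unset Strict Implicit. Unset Printing Implicit Defensive.
Import Order.TTheory GRing.Theory Num.Theory.
Local Open Scope ring_scope.

Section Dotp.
Variables (R : realType) (d : nat).
Implicit Types (u v : 'rV[R]_d) (a c : R).

Lemma dotpC u v : dotp u v = dotp v u.
Proof. by apply: eq_bigr => k _; rewrite mulrC. Qed.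

Lemma dotpZl a u v : dotp (a *: u) v = a * dotp u v.
Proof. by rewrite /dotp mulr_sumr; apply: eq_bigr => k _; rewrite mxE mulrA. Qed.

Lemma dotpZr a u v : dotp u (a *: v) = a * dotp u v.
Proof. by rewrite dotpC dotpZl dotpC. Qed.

Definition normalize u : 'rV[R]_d := (Num.sqrt (dotp u u))^-1 *: u.

Lemma dotp_normalize u v :
  dotp (normalize u) (normalize v) =
  dotp u v / (Num.sqrt (dotp u u) * Num.sqrt (dotp v v)).
Proof. by rewrite dotpZl dotpZr invfM mulrA mulrC [_^-1 * _]mulrC. Qed.

Lemma dotp_normalizexx u : 0 < dotp u u -> dotp (normalize u) (normalize u) = 1.
Proof.
by move=> u_gt0; rewrite dotp_normalize -expr2 sqr_sqrtr ?ltW // divff ?gt_eqF.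
Qed.

Lemma normr_dotp_normalize c u v : 0 < c ->
  0 < dotp u u -> 0 < dotp v v ->
  c * dotp u v ^+ 2 = dotp u u * dotp v v ->
  `|dotp (normalize u) (normalize v)| = (Num.sqrt c)^-1.
Proof.
move=> c_gt0 u_gt0 v_gt0 gram_uv.
have uv_neq0 : dotp u v != 0.
  apply: contraTneq (mulr_gt0 u_gt0 v_gt0) => uv0.
  by rewrite -gram_uv uv0 expr0n mulr0 ltxx.
rewrite dotp_normalize -sqrtrM ?ltW // -gram_uv sqrtrM ?ltW // sqrtr_sqr.
rewrite normrM normfV normrM normr_id (ger0_norm (sqrtr_ge0 c)).
by rewrite invfM mulrCA divff ?normr_eq0 // mulr1.
Qed.

Lemma normr_dotp_submx u v : dotp u u = 1 -> dotp v v = 1 ->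
  (u <= v)%MS -> `|dotp u v| = 1.
Proof.
move=> uu1 vv1 /submxP[D uDv].
have {uDv} uE : u = D 0 0 *: v by rewrite uDv {1}(mx11_scalar D) mul_scalar_mx.
move: uu1; rewrite uE !dotpZl dotpZr vv1 !mulr1 -expr2 -real_normK ?num_real //.
by move/eqP; rewrite sqrp_eq1 //; move/eqP.
Qed.
End Dotp.

Section LineSystems.
Variables (R : realType) (n d : nat) (phi : 'I_n -> 'rV[R]_d).

Lemma distinct_lines_of_angles_lt1 :
  (forall j, dotp (phi j) (phi j) = 1) ->
  (forall i j, i != j -> `|dotp (phi i) (phi j)| < 1) ->
  unit_spanning_distinct_lines phi.
Proof.
move=> phi_unit angle_lt1; split=> // i j /andP[sub_ij _].
have [//|neq_ij] := eqVneq i j.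
by have := angle_lt1 i j neq_ij; rewrite normr_dotp_submx ?ltxx.
Qed.

Lemma coherence_eq c : 0 <= c ->
  (forall x, angle_set phi x -> x <= c) -> angle_set phi c -> coherence phi = c.
Proof.
move=> c_ge0 le_c [i [j [neq_ij c_ij]]]; apply/le_anti/andP; split.
  by apply: bigmax_le => // -[k l] /= neq_kl; apply: le_c; exists k, l.
rewrite c_ij.
exact: (le_bigmax_cond _ (j := (i, j))
          (fun kl : 'I_n * 'I_n => `|dotp (phi kl.1) (phi kl.2)|)).
Qed.

End LineSystems.

Definition frame_rows : seq (seq int) :=
[:: [::  1;  1;  1;  1;  1;  1;  1;  1;  1;  1;  1];
  [:: -1; -1;  1; -1; -1; -1;  1;  1;  1; -1;  1];
  [::  1; -1; -1;  1; -1; -1; -1;  1;  1;  1; -1];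
  [:: -1;  1; -1; -1;  1; -1; -1; -1;  1;  1;  1];
  [::  1; -1;  1; -1; -1;  1; -1; -1; -1;  1;  1];
  [::  1;  1; -1;  1; -1; -1;  1; -1; -1; -1;  1];
  [::  1;  1;  1; -1;  1; -1; -1;  1; -1; -1; -1];
  [:: -1;  1;  1;  1; -1;  1; -1; -1;  1; -1; -1];
  [:: -1; -1;  1;  1;  1; -1;  1; -1; -1;  1; -1];
  [:: -1; -1; -1;  1;  1;  1; -1;  1; -1; -1;  1];
  [::  1; -1; -1; -1;  1;  1;  1; -1;  1; -1; -1];
  [:: -1;  1; -1; -1; -1;  1;  1;  1; -1;  1; -1];
  [::  1;  0;  0;  0;  0;  0;  0;  0;  0;  0;  0];
  [::  0;  1;  0;  0;  0;  0;  0;  0;  0;  0;  0];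
  [::  0;  0;  1;  0;  0;  0;  0;  0;  0;  0;  0];
  [::  0;  0;  0;  1;  0;  0;  0;  0;  0;  0;  0];
  [::  0;  0;  0;  0;  1;  0;  0;  0;  0;  0;  0];
  [::  0;  0;  0;  0;  0;  1;  0;  0;  0;  0;  0];
  [::  0;  0;  0;  0;  0;  0;  1;  0;  0;  0;  0];
  [::  0;  0;  0;  0;  0;  0;  0;  1;  0;  0;  0];
  [::  0;  0;  0;  0;  0;  0;  0;  0;  1;  0;  0];
  [::  0;  0;  0;  0;  0;  0;  0;  0;  0;  1;  0];
  [::  0;  0;  0;  0;  0;  0;  0;  0;  0;  0;  1];
  [::  0;  0;  1;  1;  1; -1;  1;  1; -1; -1;  1];
  [::  0;  1;  0; -1;  1;  1; -1;  1; -1;  1;  1];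
  [::  0;  1; -1;  0; -1; -1;  1;  1;  1;  1;  1];
  [::  0;  1;  1; -1;  0;  1;  1;  1;  1; -1; -1];
  [::  0;  1; -1;  1; -1;  0; -1;  1; -1; -1; -1];
  [::  0;  1; -1;  1;  1;  1;  0; -1;  1; -1;  1];
  [::  0;  1;  1;  1;  1; -1; -1;  0;  1;  1; -1];
  [::  0;  1;  1; -1; -1; -1; -1; -1;  0; -1;  1];
  [::  0;  1; -1; -1;  1; -1;  1; -1; -1;  0; -1];
  [::  0;  1;  1;  1; -1;  1;  1; -1; -1;  1;  0];
  [::  1;  0;  0;  1;  1;  1; -1;  1;  1; -1; -1];
  [::  1;  0;  1;  0; -1;  1;  1; -1;  1; -1;  1];
  [::  1;  0;  1; -1;  0; -1; -1;  1;  1;  1;  1];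
  [::  1;  0; -1; -1;  1;  0; -1; -1; -1; -1;  1];
  [::  1;  0; -1;  1; -1;  1;  0;  1; -1;  1;  1];
  [::  1;  0;  1; -1;  1;  1;  1;  0; -1;  1; -1];
  [::  1;  0; -1; -1; -1; -1;  1;  1;  0; -1; -1];
  [::  1;  0;  1;  1; -1; -1; -1; -1; -1;  0; -1];
  [::  1;  0; -1;  1;  1; -1;  1; -1;  1;  1;  0];
  [::  1; -1;  0;  0; -1; -1; -1;  1; -1; -1;  1];
  [::  1;  1;  0;  1;  0; -1;  1;  1; -1;  1; -1];
  [::  1;  1;  0;  1; -1;  0; -1; -1;  1;  1;  1];
  [::  1;  1;  0; -1; -1;  1;  0; -1; -1; -1; -1];
  [::  1;  1;  0; -1;  1; -1;  1;  0;  1; -1;  1];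
  [::  1; -1;  0; -1;  1; -1; -1; -1;  0;  1; -1];
  [::  1; -1;  0;  1;  1;  1;  1; -1; -1;  0;  1];
  [::  1; -1;  0; -1; -1;  1;  1;  1;  1;  1;  0];
  [::  1;  1; -1;  0;  0; -1; -1; -1;  1; -1; -1];
  [::  1; -1; -1;  0; -1;  0;  1; -1; -1;  1; -1];
  [::  1;  1;  1;  0;  1; -1;  0; -1; -1;  1;  1];
  [::  1; -1; -1;  0;  1;  1; -1;  0;  1;  1;  1];
  [::  1;  1;  1;  0; -1;  1; -1;  1;  0;  1; -1];
  [::  1; -1;  1;  0;  1; -1;  1;  1;  1;  0; -1];
  [::  1;  1; -1;  0;  1;  1;  1;  1; -1; -1;  0];
  [::  1; -1; -1;  1;  0;  0;  1;  1;  1; -1;  1];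
  [::  1; -1;  1;  1;  0;  1;  0; -1;  1;  1; -1];
  [::  1;  1;  1;  1;  0;  1; -1;  0; -1; -1;  1];
  [::  1;  1; -1; -1;  0;  1;  1; -1;  0;  1;  1];
  [::  1; -1; -1; -1;  0;  1; -1;  1; -1;  0; -1];
  [::  1; -1;  1; -1;  0; -1;  1; -1; -1; -1;  0];
  [::  1;  1; -1; -1;  1;  0;  0;  1;  1;  1; -1];
  [::  1; -1;  1; -1; -1;  0; -1;  0;  1; -1; -1];
  [::  1;  1;  1;  1;  1;  0;  1; -1;  0; -1; -1];
  [::  1;  1;  1; -1; -1;  0;  1;  1; -1;  0;  1];
  [::  1; -1;  1;  1;  1;  0; -1;  1; -1;  1;  0];
  [::  1; -1; -1;  1;  1; -1;  0;  0; -1; -1; -1];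
  [::  1; -1;  1; -1;  1;  1;  0;  1;  0; -1;  1];
  [::  1; -1; -1; -1; -1; -1;  0; -1;  1;  0;  1];
  [::  1;  1;  1;  1; -1; -1;  0;  1;  1; -1;  0];
  [::  1; -1;  1;  1; -1; -1;  1;  0;  0;  1;  1];
  [::  1;  1; -1;  1; -1;  1;  1;  0;  1;  0; -1];
  [::  1;  1; -1; -1; -1; -1; -1;  0; -1;  1;  0];
  [::  1;  1; -1;  1;  1; -1; -1;  1;  0;  0;  1];
  [::  1; -1; -1;  1; -1;  1; -1; -1;  0; -1;  0];
  [::  1;  1;  1; -1;  1;  1; -1; -1;  1;  0;  0]
]%Z.

Definition frame_entry (i k : nat) : int := nth 0 (nth [::] frame_rows i) k.

(* Written as a [foldr] rather than a big sum so that [vm_compute] can run it. *)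
Definition gram (i j : nat) : int :=
  foldr (fun k acc => frame_entry i k * frame_entry j k + acc) 0 (iota 0 11).

Definition pair_ok (g a b : int) : bool :=
  (g == 0) || has (fun c : nat => c%:Z * g ^+ 2 == a * b) [:: 9; 11; 121]%N.

Definition frame_ok : bool :=
  all (fun i => (0 < gram i i) &&
         all (fun j => (i != j) ==> pair_ok (gram i j) (gram i i) (gram j j))
           (iota 0 78))
    (iota 0 78).

Lemma frame_okT : frame_ok.
Proof. by vm_compute. Qed.

Lemma gramE i j : gram i j = \sum_(k < 11) frame_entry i k * frame_entry j k.
Proof.
rewrite -(big_mkord xpredT (fun k => frame_entry i k * frame_entry j k)).
by rewrite /gram /index_iota subn0; elim: (iota 0 11) => [|k s IH];
  rewrite ?big_nil ?big_cons //= IH.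
Qed.

Lemma frame_okP (i j : 'I_78) :
  0 < gram i i /\ (i != j -> pair_ok (gram i j) (gram i i) (gram j j)).
Proof.
have /allP/(_ i) := frame_okT; rewrite mem_iota ltn_ord => /(_ isT).
case/andP=> gram_ii_gt0 /allP/(_ j); rewrite mem_iota ltn_ord => /(_ isT).
by move/implyP.
Qed.

Section Frame.
Variable R : realType.
Implicit Types i j : 'I_78.

Definition frame_vec (i : 'I_78) : 'rV[R]_11 := \row_k (frame_entry i k)%:~R.

Definition frame (i : 'I_78) : 'rV[R]_11 := normalize (frame_vec i).

Lemma dotp_frame_vec i j : dotp (frame_vec i) (frame_vec j) = (gram i j)%:~R.
Proof.
by rewrite gramE rmorph_sum; apply: eq_bigr => k _; rewrite !mxE rmorphM.
Qed.

Lemma frame_unit i : dotp (frame i) (frame i) = 1.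
Proof. by apply: dotp_normalizexx; rewrite dotp_frame_vec ltr0z; case: (frame_okP i i). Qed.

Lemma frame_angle_sqrt (c : nat) i j : (0 < c)%N ->
  c%:Z * gram i j ^+ 2 == gram i i * gram j j ->
  `|dotp (frame i) (frame j)| = (Num.sqrt c%:R)^-1.
Proof.
move=> c_gt0 /eqP gram_ij; apply: normr_dotp_normalize; rewrite ?ltr0n //.
- by rewrite dotp_frame_vec ltr0z; case: (frame_okP i i).
- by rewrite dotp_frame_vec ltr0z; case: (frame_okP j j).
by rewrite !dotp_frame_vec -rmorphXn /= -[c%:R]/(c%:Z%:~R) -!intrM gram_ij.
Qed.

Lemma frame_angle0 i j : gram i j = 0 -> `|dotp (frame i) (frame j)| = 0.
Proof. by move=> gram_ij; rewrite dotp_normalize dotp_frame_vec gram_ij mul0r normr0. Qed.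

Lemma sqrtr_natX2 (m : nat) : Num.sqrt (m ^ 2)%:R = m%:R :> R.
Proof. by rewrite natrX sqrtr_sqr ger0_norm. Qed.

Definition frame_angles (x : R) : Prop :=
  x = 3%:R^-1 \/ x = (Num.sqrt 11%:R)^-1 \/ x = 11%:R^-1 \/ x = 0.

Lemma frame_angle_pair i j : i != j -> frame_angles `|dotp (frame i) (frame j)|.
Proof.
case: (frame_okP i j) => _ /[apply] /orP[/eqP gram_ij|/=].
  by rewrite /frame_angles frame_angle0 //; do 3 right.
rewrite orbF => /or3P[c9|c11|c121].
- by left; rewrite (frame_angle_sqrt _ c9) // (sqrtr_natX2 3).
- by right; left; rewrite (frame_angle_sqrt _ c11).
- by right; right; left; rewrite (frame_angle_sqrt _ c121) // (sqrtr_natX2 11).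
Qed.

Lemma frame_angles_le x : frame_angles x -> x <= 3%:R^-1.
Proof.
have sqrt11_ge3 : 3%:R <= Num.sqrt 11%:R :> R.
  by rewrite -(sqrtr_natX2 3) ler_sqrt ?ler_nat.
case=> [->|[->|[->|->]]] //; rewrite ?invr_ge0 //.
- by rewrite lef_pV2 ?posrE ?ltr0n // (lt_le_trans _ sqrt11_ge3) ?ltr0n.
- by rewrite lef_pV2 ?posrE ?ltr0n // ler_nat.
Qed.

Lemma frame_angles_witness x : frame_angles x -> angle_set frame x.
Proof.
case=> [->|[->|[->|->]]].
- exists (@Ordinal 78 23 isT), (@Ordinal 78 42 isT); split => //.
  by rewrite (frame_angle_sqrt (c := 9)) ?(sqrtr_natX2 3) //; vm_compute.
- exists (@Ordinal 78 0 isT), (@Ordinal 78 12 isT); split => //.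
  by rewrite (frame_angle_sqrt (c := 11)) //; vm_compute.
- exists (@Ordinal 78 0 isT), (@Ordinal 78 1 isT); split => //.
  by rewrite (frame_angle_sqrt (c := 121)) ?(sqrtr_natX2 11) //; vm_compute.
- exists (@Ordinal 78 12 isT), (@Ordinal 78 13 isT); split => //.
  by rewrite frame_angle0 //; vm_compute.
Qed.

End Frame.

Theorem mainTheorem9 (R : realType) :
  exists phi : 'I_78 -> 'rV[R]_11,
    unit_spanning_distinct_lines phi /\
    (forall x : R, angle_set phi x <->
       (x = 3%:R^-1 \/ x = (Num.sqrt 11%:R)^-1 \/ x = 11%:R^-1 \/ x = 0)) /\
    coherence phi = 3%:R^-1.
Proof.
exists (@frame R); split; [|split].
- apply: distinct_lines_of_angles_lt1 => [|i j neq_ij]; first exact: frame_unit.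
  rewrite (le_lt_trans (frame_angles_le (frame_angle_pair R neq_ij))) //.
  by rewrite invf_lt1 ?ltr0n // ltr1n.
- move=> x; split=> [[i [j [neq_ij ->]]]|]; first exact: frame_angle_pair.
  exact: frame_angles_witness.
- apply: coherence_eq; first by rewrite invr_ge0.
    by move=> x [i [j [neq_ij ->]]]; exact/frame_angles_le/frame_angle_pair.
  by apply: frame_angles_witness; left.
Qed.
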